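(* Let $\Gamma\subset\mathbb{R}^2$ be the half-lemniscate $\Gamma=\{(\cos 2\theta\cos\theta,\ \cos2\theta\sin\theta) : |\theta|\le\pi/4\}$ (given in polar coordinates by $r=\cos2\theta$, $|\theta|\le\pi/4$). Let $T$ be a triangle with vertices $A,B,C$ such that $|CA|=|CB|$, the segment $AB$ is vertical, $C$ lies strictly to the left of the line $AB$, and the angle of $T$ at $C$ is obtuse. Then there is no composition $\phi$ of a translation and a homothety with positive ratio such that $\phi(A),\phi(B),\phi(C)$ all lie on $\Gamma$. In particular, the conclusion of the Main Theorem (every non-flat triangle can be placed with its vertices on the curve by a translation and a positive homothety) fails for this Jordan curve, which is $\mathcal{C}^\infty$ except at the origin, where it has two tangents forming a right angle. *)

From Stdlib Require Import Reals.
Open Scope R_scope.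

Definition on_Gamma (p : R * R) : Prop :=
  exists th : R, - (PI / 4) <= th <= PI / 4 /\
    p = (cos (2 * th) * cos th, cos (2 * th) * sin th).

(* Composition of a positive homothety of ratio k and a translation by (a,b):
   p |-> k p + (a,b).  (Any such composition, in either order, has this form.) *)
Definition hom_trans (k a b : R) (p : R * R) : R * R :=
  (k * fst p + a, k * snd p + b).

Definition dist2 (p q : R * R) : R :=
  (fst p - fst q) ^ 2 + (snd p - snd q) ^ 2.

Definition dot_at (c p q : R * R) : R :=
  (fst p - fst c) * (fst q - fst c) + (snd p - snd c) * (snd q - snd c).

From Stdlib Require Import Reals Lra Psatz.
Open Scope R_scope.

(* The curve Gamma is symmetric about the x-axis, and its upper
   half is traced by th in [0, pi/4], along which both x = cos 2th cos th and
   x - y = cos 2th (cos th - sin th) are non-increasing (products of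
   non-negative non-increasing factors).  Hence, if C lies on the upper half
   and P is any point of Gamma strictly to the right of C, the segment CP has
   slope at most 1: for P in the upper half because going right means going
   back in th, which increases x - y; for P in the lower half because P is
   below C.  Reflecting, the same bound from below holds when C is in the
   lower half.  Now put the image of the isosceles triangle on Gamma: it is
   again isosceles with vertical base AB and apex C to the left, so C is at
   the height of the midpoint of AB, and one of A, B is at least as far above
   C (or below, depending on the half C lies in) as half the base.  The slope
   bound then forces the half-base to be at most the horizontal distance from
   C to AB, i.e. the apex angle is at most right, contradicting obtuseness. *)

Lemma on_Gamma_reflect (x y : R) : on_Gamma (x, y) -> on_Gamma (x, - y).
Proof.
intros [th [[h1 h2] E]]; injection E as -> ->.
exists (- th); split; [lra|].
replace (2 * - th) with (- (2 * th)) by ring.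
rewrite !cos_neg, sin_neg; f_equal; ring.
Qed.

(* A point of Gamma in the closed upper half plane is reached by a parameter
   th in [0, pi/4]; the only point with a negative parameter and y >= 0 is the
   origin, which is also the point of parameter pi/4. *)
Lemma Gamma_upper_param (p : R * R) : on_Gamma p -> 0 <= snd p ->
  exists th, 0 <= th <= PI / 4 /\
    p = (cos (2 * th) * cos th, cos (2 * th) * sin th).
Proof.
intros [th [[h1 h2] ->]] hy; simpl in hy.
pose proof PI_RGT_0.
destruct (Rle_or_lt 0 th) as [hth | hth].
- exists th; split; [lra | reflexivity].
- assert (hs : sin th < 0) by (apply sin_lt_0_var; lra).
  assert (hc : 0 <= cos (2 * th)) by (apply cos_ge_0; lra).
  assert (hc0 : cos (2 * th) = 0) by nra.
  exists (PI / 4); split; [lra|].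
  replace (2 * (PI / 4)) with (PI / 2) by field.
  rewrite hc0, cos_PI2; f_equal; ring.
Qed.

Lemma cos2_antitone (t u : R) : 0 <= t <= PI / 4 -> 0 <= u <= PI / 4 ->
  t <= u -> 0 <= cos (2 * u) <= cos (2 * t).
Proof.
intros ht hu htu; pose proof PI_RGT_0.
split; [apply cos_ge_0 | apply cos_decr_1]; lra.
Qed.

Lemma cos_antitone (t u : R) : 0 <= t <= PI / 4 -> 0 <= u <= PI / 4 ->
  t <= u -> 0 <= cos u <= cos t.
Proof.
intros ht hu htu; pose proof PI_RGT_0.
split; [apply cos_ge_0 | apply cos_decr_1]; lra.
Qed.

Lemma cos_sub_sin_antitone (t u : R) : 0 <= t <= PI / 4 -> 0 <= u <= PI / 4 ->
  t <= u -> 0 <= cos u - sin u <= cos t - sin t.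
Proof.
intros ht hu htu; pose proof PI_RGT_0.
assert (hsc : sin u <= cos u).
{ rewrite <- cos_shift; apply cos_decr_1; lra. }
assert (hc : cos u <= cos t) by (apply cos_decr_1; lra).
assert (hs : sin t <= sin u) by (apply sin_incr_1; lra).
lra.
Qed.

Lemma Gamma_slope_le_1 (C P : R * R) : on_Gamma C -> on_Gamma P ->
  0 <= snd C -> fst C < fst P -> snd P - snd C <= fst P - fst C.
Proof.
intros hC hP hyC hx.
destruct (Rle_or_lt 0 (snd P)) as [hyP | hyP]; [| lra].
destruct (Gamma_upper_param C hC hyC) as [t [ht ->]].
destruct (Gamma_upper_param P hP hyP) as [u [hu ->]].
simpl in *.
assert (hut : u <= t).
{ destruct (Rle_or_lt u t) as [h | h]; [exact h | exfalso].
  pose proof (cos2_antitone t u ht hu (Rlt_le _ _ h)).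
  pose proof (cos_antitone t u ht hu (Rlt_le _ _ h)).
  assert (cos (2 * u) * cos u <= cos (2 * t) * cos t)
    by (apply Rmult_le_compat; lra).
  lra. }
pose proof (cos2_antitone u t hu ht hut).
pose proof (cos_sub_sin_antitone u t hu ht hut).
assert (cos (2 * t) * (cos t - sin t) <= cos (2 * u) * (cos u - sin u))
  by (apply Rmult_le_compat; lra).
lra.
Qed.

Lemma Gamma_slope_ge_m1 (C P : R * R) : on_Gamma C -> on_Gamma P ->
  snd C <= 0 -> fst C < fst P -> snd C - snd P <= fst P - fst C.
Proof.
destruct C as [xC yC], P as [xP yP]; simpl; intros hC hP hyC hx.
pose proof (Gamma_slope_le_1 (xC, - yC) (xP, - yP)
  (on_Gamma_reflect _ _ hC) (on_Gamma_reflect _ _ hP)) as hslope.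
simpl in hslope; lra.
Qed.

Lemma Gamma_isosceles_not_obtuse (A B C : R * R) :
  on_Gamma A -> on_Gamma B -> on_Gamma C ->
  fst A = fst B -> fst C < fst A -> snd A + snd B = 2 * snd C ->
  (snd A - snd C) ^ 2 <= (fst A - fst C) ^ 2.
Proof.
intros hA hB hC hvert hleft hmid.
assert (hxB : fst C < fst B) by lra.
destruct (Rle_or_lt 0 (snd C)) as [hy | hy].
- pose proof (Gamma_slope_le_1 C A hC hA hy hleft).
  pose proof (Gamma_slope_le_1 C B hC hB hy hxB).
  nra.
- pose proof (Gamma_slope_ge_m1 C A hC hA (Rlt_le _ _ hy) hleft).
  pose proof (Gamma_slope_ge_m1 C B hC hB (Rlt_le _ _ hy) hxB).
  nra.
Qed.

Theorem mainTheorem2 (A B C : R * R)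
  (hiso : dist2 C A = dist2 C B)
  (hvert : fst A = fst B)
  (hAB : snd A <> snd B)
  (hleft : fst C < fst A)
  (hobtuse : dot_at C A B < 0) :
  ~ (exists k a b : R, 0 < k /\
       on_Gamma (hom_trans k a b A) /\
       on_Gamma (hom_trans k a b B) /\
       on_Gamma (hom_trans k a b C)).
Proof.
intros [k [a [b [hk [hA [hB hC]]]]]].
destruct A as [xA yA], B as [xB yB], C as [xC yC].
unfold dist2, dot_at in *; cbn [fst snd] in *; subst xB.
(* Equal legs over a vertical base put the apex at the height of the midpoint. *)
assert (hmid : yA + yB = 2 * yC).
{ assert (hprod : (yA - yB) * (yA + yB - 2 * yC) = 0) by nra.
  destruct (Rmult_integral _ _ hprod); [exfalso; apply hAB|]; lra. }
pose proof (Gamma_isosceles_not_obtuse _ _ _ hA hB hC) as hbound.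
unfold hom_trans in hbound; cbn [fst snd] in hbound.
assert (hscaled : k ^ 2 * (yA - yC) ^ 2 <= k ^ 2 * (xA - xC) ^ 2).
{ replace (k ^ 2 * (yA - yC) ^ 2) with ((k * yA + b - (k * yC + b)) ^ 2) by ring.
  replace (k ^ 2 * (xA - xC) ^ 2) with ((k * xA + a - (k * xC + a)) ^ 2) by ring.
  apply hbound; [reflexivity | nra | nra]. }
apply Rmult_le_reg_l in hscaled; [| nra].
(* Obtuse apex angle: the half-base exceeds the distance from C to AB. *)
replace (yB - yC) with (- (yA - yC)) in hobtuse by lra.
nra.
Qed.
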